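(* Let $\{(\Gamma_t,\theta_t)\}_{t\in[0,\underline t)}$ solve the framed curvature flow with $\theta$-velocity $$\upsilon_\theta=-(\kappa\,\partial_s\psi_3+2\,\partial_s\kappa\,\psi_3)\kappa^{-2}\psi_1-\kappa\psi_2^{-1}\psi_3^2-(\partial_s^2\kappa-\kappa\psi_3^2)\kappa^{-2}\psi_2$$ (the flow generating a trajectory surface of constant Gaussian curvature $K=0$). Then $\int_{\Gamma_t}\psi_1\,ds$ is independent of $t\in[0,\underline t)$.
   Context: $S^1=\mathbb{R}/2\pi\mathbb{Z}$; closed curves $\Gamma_t$ parametrized by $\gamma(t,\cdot):S^1\to\mathbb{R}^3$, $g=\|\partial_u\gamma\|$, $ds=g\,du$, $\partial_s=g^{-1}\partial_u$; Frenet frame $T,N,B$, curvature $\kappa$, torsion $\tau$. For an angle function $\theta$: $\nu_\theta=\cos\theta N+\sin\theta B$, $\psi_1=\kappa\cos\theta$, $\psi_2=\kappa\sin\theta$, $\psi_3=\tau+\partial_s\theta$; the formula for $\upsilon_\theta$ presupposes $\kappa>0$ and $\psi_2\neq0$. Framed curvature flow: $\partial_t\gamma=\kappa\nu_\theta$, $\partial_t\theta=\upsilon_\theta$. *)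

From Stdlib Require Import Reals List.
From Coquelicot Require Import Coquelicot.
Open Scope R_scope.

Definition vec := (R * R * R)%type.
Definition mkv (x y z : R) : vec := (x, y, z).
Definition vx (v : vec) : R := fst (fst v).
Definition vy (v : vec) : R := snd (fst v).
Definition vz (v : vec) : R := snd v.
Definition vadd (a b : vec) : vec := mkv (vx a + vx b) (vy a + vy b) (vz a + vz b).
Definition vscal (c : R) (a : vec) : vec := mkv (c * vx a) (c * vy a) (c * vz a).
Definition vdot (a b : vec) : R := vx a * vx b + vy a * vy b + vz a * vz b.
Definition vcross (a b : vec) : vec :=
  mkv (vy a * vz b - vz a * vy b) (vz a * vx b - vx a * vz b) (vx a * vy b - vy a * vx b).
Definition vnorm (a : vec) : R := sqrt (vdot a a).

(** * Fields on (t,u)-space; u is the 2pi-periodic curve parameter *)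
Definition field := R -> R -> R.
Definition vfield := R -> R -> vec.

Definition d_u (f : field) : field := fun t u => Derive (fun v => f t v) u.
Definition d_t (f : field) : field := fun t u => Derive (fun s => f s u) t.
Definition vd_u (F : vfield) : vfield := fun t u =>
  mkv (d_u (fun t u => vx (F t u)) t u) (d_u (fun t u => vy (F t u)) t u)
      (d_u (fun t u => vz (F t u)) t u).
Definition vd_t (F : vfield) : vfield := fun t u =>
  mkv (d_t (fun t u => vx (F t u)) t u) (d_t (fun t u => vy (F t u)) t u)
      (d_t (fun t u => vz (F t u)) t u).

Inductive pdir := Pt | Pu.
Definition pd (d : pdir) (f : field) : field :=
  match d with Pt => d_t f | Pu => d_u f end.
Definition iter_pd (ds : list pdir) (f : field) : field := fold_right pd f ds.

Definition open2 (U : R -> R -> Prop) : Prop :=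
  forall t u, U t u -> exists eps : R, 0 < eps /\
    forall t' u', Rabs (t' - t) < eps -> Rabs (u' - u) < eps -> U t' u'.

Definition smooth_on (U : R -> R -> Prop) (f : field) : Prop :=
  forall (ds : list pdir) (t u : R), U t u ->
    ex_derive (fun s => iter_pd ds f s u) t /\
    ex_derive (fun v => iter_pd ds f t v) u /\
    continuous (fun p : R * R => iter_pd ds f (fst p) (snd p)) (t, u).

Definition vsmooth_on (U : R -> R -> Prop) (F : vfield) : Prop :=
  smooth_on U (fun t u => vx (F t u)) /\ smooth_on U (fun t u => vy (F t u)) /\
  smooth_on U (fun t u => vz (F t u)).

Section Geometry.
Variables (gam : vfield) (th : field).

Definition speed : field := fun t u => vnorm (vd_u gam t u).
Definition s_der (f : field) : field := fun t u => d_u f t u / speed t u.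
Definition vs_der (F : vfield) : vfield := fun t u => vscal (/ speed t u) (vd_u F t u).

Definition tangent : vfield := fun t u => vscal (/ speed t u) (vd_u gam t u).
Definition curvature : field := fun t u => vnorm (vs_der tangent t u).
Definition normal : vfield := fun t u => vscal (/ curvature t u) (vs_der tangent t u).
Definition binormal : vfield := fun t u => vcross (tangent t u) (normal t u).
(* N_s = -kappa T + tau B *)
Definition torsion : field := fun t u => vdot (vs_der normal t u) (binormal t u).

Definition nu_theta : vfield := fun t u =>
  vadd (vscal (cos (th t u)) (normal t u)) (vscal (sin (th t u)) (binormal t u)).
Definition psi1 : field := fun t u => curvature t u * cos (th t u).
Definition psi2 : field := fun t u => curvature t u * sin (th t u).
Definition psi3 : field := fun t u => torsion t u + s_der th t u.

Definition upsilon : field := fun t u =>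
  - (curvature t u * s_der psi3 t u + 2 * s_der curvature t u * psi3 t u)
      * / (curvature t u ^ 2) * psi1 t u
  - curvature t u * / psi2 t u * psi3 t u ^ 2
  - (s_der (s_der curvature) t u - curvature t u * psi3 t u ^ 2)
      * / (curvature t u ^ 2) * psi2 t u.

(* int_{Gamma_t} psi1 ds = int_0^{2pi} psi1 g du *)
Definition total_psi1 (t : R) : R := RInt (fun u => psi1 t u * speed t u) 0 (2 * PI).
End Geometry.

From Stdlib Require Import Reals Lra List ClassicalEpsilon Classical.
From Coquelicot Require Import Coquelicot.
Open Scope R_scope.

(* The density of the integral, psi1 g = cos theta |gamma_u x gamma_uu| / |gamma_u|^2, is an explicit
   smooth function of (theta, gamma_u, gamma_uu), so its time derivative can be computed without any
   regularity of the Frenet frame in t: after commuting d_t with d_u it is expressed through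
   gamma_t = kappa nu_theta and its u-derivatives.  Written in the Frenet frame and with
   theta_t = upsilon_theta, this derivative collapses to d_u (d_s kappa).  Hence
   d/dt int psi1 ds = int_0^2pi d_u (d_s kappa) du = 0 by periodicity; differentiation under the
   integral sign is justified on a strip of times where |gamma_u| and the Gram determinant of
   (gamma_u, gamma_uu) stay positive, and the mean value theorem concludes. *)

(* [auto_derive] leaves [Derive (fun y => f y)], which [ring] and [rewrite] do not identify with [Derive f]. *)
Ltac eta_contract :=
  repeat match goal with |- context [Derive (fun y => ?f y) ?x] =>
    change (Derive (fun y => f y) x) with (Derive f x) end;
  repeat match goal with |- context [fun y : R => ?f y] =>
    change (fun y : R => f y) with f end.

(** * Smooth functions of one real variable *)

Fixpoint Cn (n : nat) (f : R -> R) : Prop :=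
  match n with
  | O => True
  | S m => (forall x, ex_derive f x) /\ Cn m (Derive f)
  end.

Definition Cinf (f : R -> R) : Prop := forall n, Cn n f.

Lemma Cn_ext n : forall f g, (forall x, f x = g x) -> Cn n f -> Cn n g.
Proof.
  induction n as [|n IH]; simpl; auto.
  intros f g H [H1 H2]; split.
  - intro x; apply ex_derive_ext with f; auto.
  - apply IH with (Derive f); auto. intro x; apply Derive_ext; auto.
Qed.

Lemma Cn_pred n : forall f, Cn (S n) f -> Cn n f.
Proof.
  induction n as [|n IH]; simpl; auto.
  intros f [H1 [H2 H3]]; split; auto. apply IH. simpl; auto.
Qed.

Lemma Cn_const n : forall c, Cn n (fun _ => c).
Proof.
  induction n as [|n IH]; simpl; auto. intros c; split.
  - intros; apply ex_derive_const.
  - apply Cn_ext with (fun _ => 0); [intros; symmetry; apply Derive_const | apply IH].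
Qed.

Lemma Cn_plus n : forall f g, Cn n f -> Cn n g -> Cn n (fun x => f x + g x).
Proof.
  induction n as [|n IH]; simpl; auto.
  intros f g [F1 F2] [G1 G2]; split.
  - intros x; apply (ex_derive_plus f g x); auto.
  - apply Cn_ext with (fun x => Derive f x + Derive g x).
    + intros; rewrite Derive_plus; auto.
    + apply IH; auto.
Qed.

Lemma Cn_opp n : forall f, Cn n f -> Cn n (fun x => - f x).
Proof.
  induction n as [|n IH]; simpl; auto.
  intros f [F1 F2]; split.
  - intros x; apply (ex_derive_opp f x); auto.
  - apply Cn_ext with (fun x => - Derive f x).
    + intros; rewrite Derive_opp; auto.
    + apply IH; auto.
Qed.

Lemma Cn_mult n : forall f g, Cn n f -> Cn n g -> Cn n (fun x => f x * g x).
Proof.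
  induction n as [|n IH]; simpl; auto.
  intros f g [F1 F2] [G1 G2]; split.
  - intros x; apply (ex_derive_mult f g x); auto.
  - apply Cn_ext with (fun x => Derive f x * g x + f x * Derive g x).
    + intros; rewrite Derive_mult; auto.
    + apply Cn_plus; apply IH; auto; apply Cn_pred; simpl; auto.
Qed.

Lemma Cn_inv n : forall f, (forall x, f x <> 0) -> Cn n f -> Cn n (fun x => / f x).
Proof.
  induction n as [|n IH]; simpl; auto.
  intros f Hf [F1 F2]; split.
  - intros x; apply (ex_derive_inv f x); auto.
  - apply Cn_ext with (fun x => - (Derive f x * (/ f x * / f x))).
    + intros; rewrite Derive_inv; auto. field; auto.
    + apply Cn_opp, Cn_mult; auto.
      apply Cn_mult; apply IH; auto; apply Cn_pred; simpl; auto.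
Qed.

Lemma Cn_sqrt n : forall f, (forall x, 0 < f x) -> Cn n f -> Cn n (fun x => sqrt (f x)).
Proof.
  induction n as [|n IH]; simpl; auto.
  intros f Hf [F1 F2].
  assert (Dsqrt : forall x, is_derive sqrt (f x) (/ (2 * sqrt (f x))))
    by (intros x; apply is_derive_Reals, derivable_pt_lim_sqrt, Hf).
  split.
  - intros x. apply ex_derive_comp; [eexists; apply Dsqrt | auto].
  - apply Cn_ext with (fun x => Derive f x * / (2 * sqrt (f x))).
    + intros x. rewrite (Derive_comp sqrt f x); [| eexists; apply Dsqrt | auto].
      rewrite (is_derive_unique _ _ _ (Dsqrt x)). ring.
    + apply Cn_mult; auto. apply Cn_inv.
      * intros x; specialize (sqrt_lt_R0 _ (Hf x)); lra.
      * apply Cn_mult; [apply Cn_const | apply IH; auto; apply Cn_pred; simpl; auto].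
Qed.

Lemma Cn_cos_sin n : forall f, Cn n f -> Cn n (fun x => cos (f x)) /\ Cn n (fun x => sin (f x)).
Proof.
  induction n as [|n IH]; simpl; auto.
  intros f [F1 F2]. destruct (IH f) as [IC IS]; [apply Cn_pred; simpl; auto|].
  assert (Dcos : forall y, is_derive cos y (- sin y))
    by (intros; apply is_derive_Reals, derivable_pt_lim_cos).
  assert (Dsin : forall y, is_derive sin y (cos y))
    by (intros; apply is_derive_Reals, derivable_pt_lim_sin).
  split; split.
  - intros x; apply ex_derive_comp; [eexists; apply Dcos | auto].
  - apply Cn_ext with (fun x => Derive f x * - sin (f x)).
    + intros x. rewrite (Derive_comp cos f x); [| eexists; apply Dcos | auto].
      rewrite (is_derive_unique _ _ _ (Dcos (f x))). ring.
    + apply Cn_mult, Cn_opp; auto.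
  - intros x; apply ex_derive_comp; [eexists; apply Dsin | auto].
  - apply Cn_ext with (fun x => Derive f x * cos (f x)).
    + intros x. rewrite (Derive_comp sin f x); [| eexists; apply Dsin | auto].
      rewrite (is_derive_unique _ _ _ (Dsin (f x))). ring.
    + apply Cn_mult; auto.
Qed.

Lemma Cinf_ext f g : (forall x, f x = g x) -> Cinf f -> Cinf g.
Proof. intros H S n; apply Cn_ext with f; auto. Qed.
Lemma Cinf_plus f g : Cinf f -> Cinf g -> Cinf (fun x => f x + g x).
Proof. intros A B n; apply Cn_plus; auto. Qed.
Lemma Cinf_opp f : Cinf f -> Cinf (fun x => - f x).
Proof. intros A n; apply Cn_opp; auto. Qed.
Lemma Cinf_minus f g : Cinf f -> Cinf g -> Cinf (fun x => f x - g x).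
Proof. intros A B; apply Cinf_plus; auto; apply Cinf_opp; auto. Qed.
Lemma Cinf_mult f g : Cinf f -> Cinf g -> Cinf (fun x => f x * g x).
Proof. intros A B n; apply Cn_mult; auto. Qed.
Lemma Cinf_inv f : (forall x, f x <> 0) -> Cinf f -> Cinf (fun x => / f x).
Proof. intros H A n; apply Cn_inv; auto. Qed.
Lemma Cinf_sqrt f : (forall x, 0 < f x) -> Cinf f -> Cinf (fun x => sqrt (f x)).
Proof. intros H A n; apply Cn_sqrt; auto. Qed.
Lemma Cinf_cos f : Cinf f -> Cinf (fun x => cos (f x)).
Proof. intros A n; apply Cn_cos_sin; auto. Qed.
Lemma Cinf_sin f : Cinf f -> Cinf (fun x => sin (f x)).
Proof. intros A n; apply Cn_cos_sin; auto. Qed.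
Lemma Cinf_Derive f : Cinf f -> Cinf (Derive f).
Proof. intros A n; apply (A (S n)). Qed.
Lemma Cinf_ex_derive f x : Cinf f -> ex_derive f x.
Proof. intros A; apply (A 1%nat). Qed.

Ltac vec_unfold :=
  repeat match goal with v : vec |- _ =>
    let a := fresh "a" in let b := fresh "b" in let c := fresh "c" in destruct v as [[a b] c] end;
  unfold vdot, vcross, vscal, vadd, mkv, vx, vy, vz in *; simpl in *.

Lemma vec_ext (a b : vec) : vx a = vx b -> vy a = vy b -> vz a = vz b -> a = b.
Proof. destruct a as [[a1 a2] a3], b as [[b1 b2] b3]; unfold vx, vy, vz; simpl; intros; subst; auto. Qed.

Lemma vdot_comm a b : vdot a b = vdot b a. Proof. vec_unfold; ring. Qed.
Lemma vdot_scal_l c a b : vdot (vscal c a) b = c * vdot a b. Proof. vec_unfold; ring. Qed.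
Lemma vdot_scal_r c a b : vdot a (vscal c b) = c * vdot a b. Proof. vec_unfold; ring. Qed.
Lemma vdot_add_l a b c : vdot (vadd a b) c = vdot a c + vdot b c. Proof. vec_unfold; ring. Qed.
Lemma vdot_add_r a b c : vdot c (vadd a b) = vdot c a + vdot c b. Proof. vec_unfold; ring. Qed.
Lemma vdot_cross_l a b : vdot (vcross a b) a = 0. Proof. vec_unfold; ring. Qed.
Lemma vdot_cross_r a b : vdot (vcross a b) b = 0. Proof. vec_unfold; ring. Qed.
Lemma vcross_scal_self c a : vcross (vscal c a) a = mkv 0 0 0.
Proof. apply vec_ext; vec_unfold; ring. Qed.
Lemma vdot_zero_l a : vdot (mkv 0 0 0) a = 0. Proof. vec_unfold; ring. Qed.
Lemma vdot_cross_cross a b :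
  vdot (vcross a b) (vcross a b) = vdot a a * vdot b b - vdot a b * vdot a b.
Proof. vec_unfold; ring. Qed.

Lemma vdot_orthonormal_expand (T N a w : vec) :
  vdot T T = 1 -> vdot N N = 1 -> vdot T N = 0 ->
  vdot a w = vdot w T * vdot a T + vdot w N * vdot a N
             + vdot w (vcross T N) * vdot a (vcross T N).
Proof.
  intros H1 H2 H3.
  assert (E : (vdot T T * vdot N N - vdot T N * vdot T N) * vdot a w =
    vdot w T * vdot a T * vdot N N - vdot w T * vdot a N * vdot T N
    - vdot w N * vdot a T * vdot T N + vdot w N * vdot a N * vdot T T
    + vdot w (vcross T N) * vdot a (vcross T N)) by (vec_unfold; ring).
  rewrite H1, H2, H3 in E. lra.
Qed.

Lemma vdot_cross_orthonormal (T N X Y : vec) : vdot N N = 1 -> vdot T N = 0 ->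
  vdot (vcross T X) Y = vdot X N * vdot Y (vcross T N) - vdot X (vcross T N) * vdot Y N.
Proof.
  intros H1 H2.
  assert (E : vdot (vcross T X) Y * vdot N N - vdot T N * vdot (vcross X Y) N =
    vdot X N * vdot Y (vcross T N) - vdot X (vcross T N) * vdot Y N) by (vec_unfold; ring).
  rewrite H1, H2 in E. lra.
Qed.

Definition vDerive (F : R -> vec) (x : R) : vec :=
  mkv (Derive (fun v => vx (F v)) x) (Derive (fun v => vy (F v)) x) (Derive (fun v => vz (F v)) x).
Definition vex_derive (F : R -> vec) (x : R) : Prop :=
  ex_derive (fun v => vx (F v)) x /\ ex_derive (fun v => vy (F v)) x /\ ex_derive (fun v => vz (F v)) x.
Definition vCinf (F : R -> vec) : Prop :=
  Cinf (fun v => vx (F v)) /\ Cinf (fun v => vy (F v)) /\ Cinf (fun v => vz (F v)).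

Lemma vd_u_vDerive F t v : vd_u F t v = vDerive (F t) v.
Proof. reflexivity. Qed.

Lemma vDerive_ext F G x : (forall v, F v = G v) -> vDerive F x = vDerive G x.
Proof. intros H. apply vec_ext; simpl; apply Derive_ext; intros; rewrite H; auto. Qed.

Lemma vCinf_ext F G : (forall x, F x = G x) -> vCinf F -> vCinf G.
Proof.
  intros H [A [B C]]; repeat split;
  [apply Cinf_ext with (fun v => vx (F v)) | apply Cinf_ext with (fun v => vy (F v))
  | apply Cinf_ext with (fun v => vz (F v))]; auto; intros; rewrite H; auto.
Qed.

Lemma vCinf_scal a F : Cinf a -> vCinf F -> vCinf (fun v => vscal (a v) (F v)).
Proof. intros Ha [A [B C]]; repeat split; simpl; apply Cinf_mult; auto. Qed.

Lemma vCinf_cross F G : vCinf F -> vCinf G -> vCinf (fun v => vcross (F v) (G v)).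
Proof. intros [A [B C]] [A' [B' C']]; repeat split; simpl; apply Cinf_minus; apply Cinf_mult; auto. Qed.

Lemma Cinf_vdot F G : vCinf F -> vCinf G -> Cinf (fun v => vdot (F v) (G v)).
Proof. intros [A [B C]] [A' [B' C']]; unfold vdot; repeat apply Cinf_plus; apply Cinf_mult; auto. Qed.

Lemma vCinf_vDerive F : vCinf F -> vCinf (vDerive F).
Proof. intros [A [B C]]; repeat split; simpl; apply Cinf_Derive; auto. Qed.

Lemma vCinf_vex_derive F x : vCinf F -> vex_derive F x.
Proof. intros [A [B C]]; split; [|split]; apply Cinf_ex_derive; auto. Qed.

Lemma is_derive_vdot F G x : vex_derive F x -> vex_derive G x ->
  is_derive (fun v => vdot (F v) (G v)) x (vdot (vDerive F x) (G x) + vdot (F x) (vDerive G x)).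
Proof.
  intros [A [B C]] [A' [B' C']]. unfold vdot, vDerive; simpl.
  assert (D : forall f1 f2 f3 g1 g2 g3 : R -> R,
    ex_derive f1 x -> ex_derive f2 x -> ex_derive f3 x ->
    ex_derive g1 x -> ex_derive g2 x -> ex_derive g3 x ->
    is_derive (fun v => f1 v * g1 v + f2 v * g2 v + f3 v * g3 v) x
      ((Derive f1 x * g1 x + Derive f2 x * g2 x + Derive f3 x * g3 x) +
       (f1 x * Derive g1 x + f2 x * Derive g2 x + f3 x * Derive g3 x))).
  { intros. auto_derive; [repeat split; auto|]. eta_contract. ring. }
  apply D; auto.
Qed.

Lemma Derive_vdot F G x : vex_derive F x -> vex_derive G x ->
  Derive (fun v => vdot (F v) (G v)) x = vdot (vDerive F x) (G x) + vdot (F x) (vDerive G x).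
Proof. intros; apply is_derive_unique, is_derive_vdot; auto. Qed.

Lemma vDerive_scal (a : R -> R) F x : ex_derive a x -> vex_derive F x ->
  vDerive (fun v => vscal (a v) (F v)) x = vadd (vscal (Derive a x) (F x)) (vscal (a x) (vDerive F x)).
Proof.
  intros Ha [A [B C]].
  apply vec_ext; cbn [vDerive vscal vadd vx vy vz mkv fst snd]; rewrite Derive_mult; auto.
Qed.

Lemma vDerive_cross F G x : vex_derive F x -> vex_derive G x ->
  vDerive (fun v => vcross (F v) (G v)) x = vadd (vcross (vDerive F x) (G x)) (vcross (F x) (vDerive G x)).
Proof.
  intros [A [B C]] [A' [B' C']].
  assert (D : forall f1 g1 f2 g2 : R -> R,
    ex_derive f1 x -> ex_derive g1 x -> ex_derive f2 x -> ex_derive g2 x ->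
    Derive (fun v => f1 v * g1 v - f2 v * g2 v) x =
    (Derive f1 x * g1 x - Derive f2 x * g2 x) + (f1 x * Derive g1 x - f2 x * Derive g2 x)).
  { intros. apply is_derive_unique. auto_derive; [repeat split; auto|]. eta_contract. ring. }
  apply vec_ext; cbn [vDerive vcross vadd vx vy vz mkv fst snd]; apply D; auto.
Qed.

Lemma sqrt_lt_R0_inv x : 0 < sqrt x -> 0 < x.
Proof. intros H. destruct (Rle_lt_dec x 0) as [h|h]; auto. rewrite sqrt_neg_0 in H; lra. Qed.

Lemma vnorm_pos_vdot a : 0 < vnorm a -> 0 < vdot a a.
Proof. apply sqrt_lt_R0_inv. Qed.

Lemma vnorm_sqr a : 0 < vnorm a -> vnorm a * vnorm a = vdot a a.
Proof. intros H. apply sqrt_sqrt. left; apply vnorm_pos_vdot; auto. Qed.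

Lemma vdot_normalize a : 0 < vnorm a -> vdot (vscal (/ vnorm a) a) (vscal (/ vnorm a) a) = 1.
Proof.
  intros H. rewrite vdot_scal_l, vdot_scal_r, <- (vnorm_sqr _ H). field. lra.
Qed.

Lemma Derive_const_fun (f : R -> R) c x : (forall v, f v = c) -> Derive f x = 0.
Proof. intros H. rewrite (Derive_ext f (fun _ => c)); auto. apply Derive_const. Qed.

(** * The density psi1 g as a function of (theta, gamma_u, gamma_uu) *)

Definition gram (p q : vec) : R := vdot p p * vdot q q - vdot p q * vdot p q.

(* By [curvature_gram], kappa g = sqrt (gram gamma_u gamma_uu) / g^2. *)
Definition psi1_density (c : R) (p q : vec) : R := cos c * sqrt (gram p q) / vdot p p.

Definition psi1_density_deriv (c dc : R) (p dp q dq : vec) : R :=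
  let dgram := 2 * vdot p dp * vdot q q + vdot p p * (2 * vdot q dq)
               - 2 * vdot p q * (vdot dp q + vdot p dq) in
  - sin c * dc * sqrt (gram p q) / vdot p p
  + cos c * (dgram / (2 * sqrt (gram p q)) / vdot p p
             - sqrt (gram p q) * (2 * vdot p dp) / (vdot p p * vdot p p)).

Lemma is_derive_inv_vnorm F x : vex_derive F x -> 0 < vdot (F x) (F x) ->
  is_derive (fun v => / vnorm (F v)) x (- vdot (F x) (vDerive F x) / (vnorm (F x) ^ 3)).
Proof.
  intros HF Hpos. assert (S := sqrt_lt_R0 _ Hpos).
  set (n2 := vdot (F x) (F x)) in *.
  assert (Dn : is_derive (fun v => vdot (F v) (F v)) x (2 * vdot (F x) (vDerive F x))).
  { assert (D := is_derive_vdot F F x HF HF).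
    rewrite (vdot_comm (vDerive F x)) in D.
    replace (2 * vdot (F x) (vDerive F x)) with
      (vdot (F x) (vDerive F x) + vdot (F x) (vDerive F x)) by ring.
    exact D. }
  assert (Dr : is_derive (fun y => / sqrt y) n2 (- / (2 * n2 * sqrt n2))).
  { auto_derive; [lra|]. rewrite sqrt_sqrt by lra. field. lra. }
  assert (C := is_derive_comp (fun y => / sqrt y) (fun v => vdot (F v) (F v)) x _ _ Dr Dn).
  cbv beta in C.
  replace (- vdot (F x) (vDerive F x) / vnorm (F x) ^ 3)
    with (scal (2 * vdot (F x) (vDerive F x)) (- / (2 * n2 * sqrt n2))); [exact C|].
  assert (E : sqrt n2 ^ 3 = n2 * sqrt n2) by (rewrite <- (sqrt_sqrt n2) at 2; [ring | lra]).
  unfold vnorm. fold n2. rewrite E.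
  unfold scal; simpl; unfold mult; simpl. field. lra.
Qed.

Lemma sqrt_mult_sqr x y : 0 < y -> sqrt (x * (y * y)) = sqrt x * y.
Proof.
  intros Hy. destruct (Rle_lt_dec 0 x) as [h|h].
  - rewrite sqrt_mult_alt, sqrt_square; lra.
  - rewrite !sqrt_neg_0; nra.
Qed.

Lemma curvature_gram gam s u :
  vex_derive (vd_u gam s) u -> 0 < vdot (vd_u gam s u) (vd_u gam s u) ->
  curvature gam s u = sqrt (gram (vd_u gam s u) (vd_u (vd_u gam) s u)) / speed gam s u ^ 3.
Proof.
  intros HP Hpos.
  set (P := vd_u gam s u). set (Q := vd_u (vd_u gam) s u). set (g := speed gam s u).
  assert (Hg : 0 < g) by (apply sqrt_lt_R0; auto).
  assert (HPP : vdot P P = g * g) by (symmetry; apply vnorm_sqr; auto).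
  assert (HT : vDerive (tangent gam s) u = vadd (vscal (- vdot P Q / g ^ 3) P) (vscal (/ g) Q)).
  { unfold tangent. rewrite vDerive_scal; auto.
    - replace (Derive (fun v => / speed gam s v) u) with (- vdot P Q / g ^ 3); [reflexivity|].
      symmetry; apply is_derive_unique, (is_derive_inv_vnorm (vd_u gam s)); auto.
    - eexists; apply (is_derive_inv_vnorm (vd_u gam s)); auto. }
  assert (HW : vdot (vs_der gam (tangent gam) s u) (vs_der gam (tangent gam) s u)
               = gram P Q * (/ g ^ 3 * / g ^ 3)).
  { unfold vs_der. rewrite vd_u_vDerive, HT. fold g. unfold gram.
    rewrite !vdot_scal_l, !vdot_scal_r, !vdot_add_l, !vdot_add_r, !vdot_scal_l, !vdot_scal_r.
    rewrite (vdot_comm Q P), HPP. field. lra. }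
  unfold curvature, vnorm. rewrite HW, sqrt_mult_sqr; [reflexivity|].
  apply Rinv_0_lt_compat, pow_lt, Hg.
Qed.

Lemma psi1_speed_density gam th s u :
  vex_derive (vd_u gam s) u -> 0 < vdot (vd_u gam s u) (vd_u gam s u) ->
  psi1 gam th s u * speed gam s u = psi1_density (th s u) (vd_u gam s u) (vd_u (vd_u gam) s u).
Proof.
  intros HP Hpos.
  assert (Hg : 0 < speed gam s u) by (apply sqrt_lt_R0; auto).
  unfold psi1, psi1_density. rewrite curvature_gram by auto.
  rewrite <- (vnorm_sqr (vd_u gam s u)) by auto. fold (speed gam s u). field. lra.
Qed.

Lemma gram_pos gam s u :
  vex_derive (vd_u gam s) u -> 0 < vdot (vd_u gam s u) (vd_u gam s u) -> 0 < curvature gam s u ->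
  0 < gram (vd_u gam s u) (vd_u (vd_u gam) s u).
Proof.
  intros HP Hpos Hk. rewrite curvature_gram in Hk by auto.
  assert (Hg : 0 < speed gam s u) by (apply sqrt_lt_R0; auto).
  apply sqrt_lt_R0_inv. unfold Rdiv in Hk.
  assert (0 < / speed gam s u ^ 3) by (apply Rinv_0_lt_compat, pow_lt, Hg).
  pose proof (sqrt_pos (gram (vd_u gam s u) (vd_u (vd_u gam) s u))). nra.
Qed.

Lemma is_derive_psi1_density (a : R -> R) (p q : R -> vec) x :
  ex_derive a x -> vex_derive p x -> vex_derive q x ->
  0 < vdot (p x) (p x) -> 0 < gram (p x) (q x) ->
  is_derive (fun s => psi1_density (a s) (p s) (q s)) x
    (psi1_density_deriv (a x) (Derive a x) (p x) (vDerive p x) (q x) (vDerive q x)).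
Proof.
  intros Ha Hp Hq Hpp Hgram. assert (S := sqrt_lt_R0 _ Hgram).
  assert (D : forall pp qq pq : R -> R,
    ex_derive pp x -> ex_derive qq x -> ex_derive pq x ->
    0 < pp x -> 0 < pp x * qq x - pq x * pq x ->
    is_derive (fun s => cos (a s) * sqrt (pp s * qq s - pq s * pq s) / pp s) x
      (- sin (a x) * Derive a x * sqrt (pp x * qq x - pq x * pq x) / pp x
       + cos (a x) * ((Derive pp x * qq x + pp x * Derive qq x - 2 * pq x * Derive pq x)
                      / (2 * sqrt (pp x * qq x - pq x * pq x)) / pp x
                      - sqrt (pp x * qq x - pq x * pq x) * Derive pp x / (pp x * pp x)))).
  { intros pp qq pq Epp Eqq Epq H1 H2. assert (S' := sqrt_lt_R0 _ H2).
    auto_derive; [repeat split; auto; lra|]. eta_contract. unfold Rminus in *. field. lra. }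
  assert (E := D (fun s => vdot (p s) (p s)) (fun s => vdot (q s) (q s)) (fun s => vdot (p s) (q s))).
  rewrite (Derive_vdot p p), (Derive_vdot q q), (Derive_vdot p q) in E by auto.
  rewrite (vdot_comm (vDerive p x) (p x)), (vdot_comm (vDerive q x) (q x)) in E.
  unfold psi1_density, psi1_density_deriv, gram in *.
  replace (2 * vdot (p x) (vDerive p x) * vdot (q x) (q x) + vdot (p x) (p x) * (2 * vdot (q x) (vDerive q x))
           - 2 * vdot (p x) (q x) * (vdot (vDerive p x) (q x) + vdot (p x) (vDerive q x)))
    with ((vdot (p x) (vDerive p x) + vdot (p x) (vDerive p x)) * vdot (q x) (q x)
          + vdot (p x) (p x) * (vdot (q x) (vDerive q x) + vdot (q x) (vDerive q x))
          - 2 * vdot (p x) (q x) * (vdot (vDerive p x) (q x) + vdot (p x) (vDerive q x))) by ring.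
  replace (2 * vdot (p x) (vDerive p x)) with (vdot (p x) (vDerive p x) + vdot (p x) (vDerive p x)) by ring.
  apply E; auto; eexists; apply is_derive_vdot; auto.
Qed.

Lemma psi1_density_deriv_frame c dc (T N dp dq : vec) g g1 k :
  0 < g -> 0 < k -> vdot T T = 1 -> vdot N N = 1 -> vdot T N = 0 ->
  psi1_density_deriv c dc (vscal g T) dp (vadd (vscal g1 T) (vscal (g * g * k) N)) dq
  = - sin c * dc * g * k + cos c * (vdot N dq / g - g1 * vdot N dp / (g * g) - k * vdot T dp).
Proof.
  intros Hg Hk TT NN TN.
  assert (NT : vdot N T = 0) by (rewrite vdot_comm; auto).
  assert (G : gram (vscal g T) (vadd (vscal g1 T) (vscal (g * g * k) N)) = (g * g * g * k) * (g * g * g * k)).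
  { unfold gram. rewrite !vdot_scal_l, !vdot_add_r, !vdot_add_l, !vdot_scal_l, !vdot_scal_r.
    rewrite TT, NN, TN, NT. ring. }
  unfold psi1_density_deriv. rewrite G, sqrt_square by (repeat apply Rmult_le_pos; lra).
  rewrite !vdot_scal_l, !vdot_add_r, !vdot_add_l, !vdot_scal_l, !vdot_scal_r.
  rewrite TT, NN, TN, NT, (vdot_comm dp T), (vdot_comm dp N).
  field. lra.
Qed.

(* [TV1], [NV1], [BV1], [NV2] stand for T.V_u, N.V_u, B.V_u, N.V_uu with V = gamma_t, and [ups]
   for upsilon_theta; the identity holds only modulo cos^2 + sin^2 = 1, whence the factorisation [E]. *)
Lemma K0_frame_identity (g g1 k k1 k2 ta ta1 th1 th2 c s ups TV1 NV1 BV1 NV2 : R) :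
  0 < g -> 0 < k -> s <> 0 -> c * c + s * s = 1 ->
  let p1 := k * c in let p2 := k * s in
  let p1' := k1 * c - k * s * th1 in let p2' := k1 * s + k * c * th1 in
  let p1'' := k2 * c - 2 * k1 * s * th1 - k * c * th1 * th1 - k * s * th2 in
  let p3 := ta + th1 / g in let p3' := ta1 + (th2 * g - th1 * g1) / (g * g) in
  TV1 = - (g * k * p1) ->
  NV1 = p1' - g * ta * p2 ->
  BV1 = p2' + g * ta * p1 ->
  NV2 = p1'' - (g1 * ta * p2 + g * ta1 * p2 + g * ta * p2') + g * k * TV1 - g * ta * BV1 ->
  ups = - (k * (p3' / g) + 2 * (k1 / g) * p3) * / (k ^ 2) * p1 - k * / p2 * p3 ^ 2
        - ((k2 * g - k1 * g1) / (g * g) / g - k * p3 ^ 2) * / (k ^ 2) * p2 ->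
  - s * ups * g * k + c * (NV2 / g - g1 * NV1 / (g * g) - k * TV1) = (k2 * g - k1 * g1) / (g * g).
Proof.
  intros Hg Hk Hs Hcs p1 p2 p1' p2' p1'' p3 p3' E1 E2 E3 E4 E5.
  subst TV1 BV1 NV1 NV2 ups.
  assert (E : - s * (- (k * (p3' / g) + 2 * (k1 / g) * p3) * / (k ^ 2) * p1 - k * / p2 * p3 ^ 2
        - ((k2 * g - k1 * g1) / (g * g) / g - k * p3 ^ 2) * / (k ^ 2) * p2) * g * k
     + c * ((p1'' - (g1 * ta * p2 + g * ta1 * p2 + g * ta * p2') + g * k * (- (g * k * p1))
             - g * ta * (p2' + g * ta * p1)) / g - g1 * (p1' - g * ta * p2) / (g * g)
            - k * (- (g * k * p1)))
     - (k2 * g - k1 * g1) / (g * g)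
     = g * (c * c + s * s - 1) * ((k2 * g - k1 * g1) / (g * g) / g - k * p3 ^ 2)).
  { unfold p1, p2, p1', p2', p1'', p3, p3'. field. repeat split; lra. }
  rewrite Hcs in E. lra.
Qed.

(** * The Frenet frame and the flow at a fixed time *)

Section FixedTime.
Variables (gam : vfield) (t0 : R).
Hypothesis gam_smooth : vCinf (gam t0).
Hypothesis speed_pos : forall v, 0 < speed gam t0 v.
Hypothesis curvature_pos : forall v, 0 < curvature gam t0 v.

Local Notation g := (speed gam t0).
Local Notation k := (curvature gam t0).
Local Notation T := (tangent gam t0).
Local Notation N := (normal gam t0).
Local Notation B := (binormal gam t0).

Lemma vCinf_vd_u : vCinf (vd_u gam t0).
Proof. apply vCinf_ext with (vDerive (gam t0)); [reflexivity | apply vCinf_vDerive; auto]. Qed.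

Lemma Cinf_speed : Cinf g.
Proof.
  apply Cinf_sqrt; [intros; apply vnorm_pos_vdot, speed_pos|].
  apply Cinf_vdot; apply vCinf_vd_u.
Qed.

Lemma vCinf_tangent : vCinf T.
Proof.
  apply vCinf_scal; [|apply vCinf_vd_u].
  apply Cinf_inv, Cinf_speed. intros x; specialize (speed_pos x); lra.
Qed.

Lemma vCinf_vs_der_tangent : vCinf (vs_der gam (tangent gam) t0).
Proof.
  apply vCinf_scal; [|apply vCinf_vDerive, vCinf_tangent].
  apply Cinf_inv, Cinf_speed. intros x; specialize (speed_pos x); lra.
Qed.

Lemma Cinf_curvature : Cinf k.
Proof.
  apply Cinf_sqrt; [intros; apply vnorm_pos_vdot, curvature_pos|].
  apply Cinf_vdot; apply vCinf_vs_der_tangent.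
Qed.

Lemma vCinf_normal : vCinf N.
Proof.
  apply vCinf_scal; [|apply vCinf_vs_der_tangent].
  apply Cinf_inv, Cinf_curvature. intros x; specialize (curvature_pos x); lra.
Qed.

Lemma vCinf_binormal : vCinf B.
Proof. apply vCinf_cross; [apply vCinf_tangent | apply vCinf_normal]. Qed.

Lemma Cinf_torsion : Cinf (torsion gam t0).
Proof.
  apply Cinf_vdot; [|apply vCinf_binormal].
  apply vCinf_scal; [|apply vCinf_vDerive, vCinf_normal].
  apply Cinf_inv, Cinf_speed. intros x; specialize (speed_pos x); lra.
Qed.

Lemma vd_u_speed_tangent v : vd_u gam t0 v = vscal (g v) (T v).
Proof.
  specialize (speed_pos v). unfold tangent.
  apply vec_ext; cbn [vscal vx vy vz mkv fst snd]; field; lra.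
Qed.

Lemma tangent_unit v : vdot (T v) (T v) = 1.
Proof. apply vdot_normalize, speed_pos. Qed.

Lemma normal_unit v : vdot (N v) (N v) = 1.
Proof. apply vdot_normalize, curvature_pos. Qed.

Lemma vDerive_tangent v : vDerive T v = vscal (g v * k v) (N v).
Proof.
  specialize (speed_pos v). specialize (curvature_pos v). intros.
  unfold normal at 1, vs_der. rewrite vd_u_vDerive.
  apply vec_ext; cbn [vscal vx vy vz mkv fst snd]; field; lra.
Qed.

Lemma tangent_normal_orth v : vdot (T v) (N v) = 0.
Proof.
  assert (E := Derive_const_fun _ 1 v tangent_unit).
  rewrite Derive_vdot in E by apply vCinf_vex_derive, vCinf_tangent.
  rewrite vDerive_tangent, vdot_scal_l, vdot_scal_r, (vdot_comm (N v)) in E.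
  specialize (speed_pos v). specialize (curvature_pos v). intros.
  assert (0 < g v * k v) by (apply Rmult_lt_0_compat; auto).
  nra.
Qed.

Lemma tangent_binormal_orth v : vdot (T v) (B v) = 0.
Proof. unfold binormal. rewrite vdot_comm. apply vdot_cross_l. Qed.

Lemma normal_binormal_orth v : vdot (N v) (B v) = 0.
Proof. unfold binormal. rewrite vdot_comm. apply vdot_cross_r. Qed.

Lemma binormal_unit v : vdot (B v) (B v) = 1.
Proof.
  unfold binormal. rewrite vdot_cross_cross, tangent_unit, normal_unit, tangent_normal_orth. ring.
Qed.

Lemma vdot_frame_expand v a w :
  vdot a w = vdot w (T v) * vdot a (T v) + vdot w (N v) * vdot a (N v) + vdot w (B v) * vdot a (B v).
Proof.
  apply vdot_orthonormal_expand; [apply tangent_unit | apply normal_unit | apply tangent_normal_orth].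
Qed.

Lemma vDerive_normal_normal v : vdot (vDerive N v) (N v) = 0.
Proof.
  assert (E := Derive_const_fun _ 1 v normal_unit).
  rewrite Derive_vdot in E by apply vCinf_vex_derive, vCinf_normal.
  rewrite (vdot_comm (N v)) in E. lra.
Qed.

Lemma vDerive_normal_tangent v : vdot (vDerive N v) (T v) = - (g v * k v).
Proof.
  assert (E := Derive_const_fun _ 0 v tangent_normal_orth).
  rewrite Derive_vdot in E by (apply vCinf_vex_derive; apply vCinf_tangent || apply vCinf_normal).
  rewrite vDerive_tangent, vdot_scal_l, normal_unit, (vdot_comm (T v)) in E. lra.
Qed.

Lemma vDerive_normal_binormal v : vdot (vDerive N v) (B v) = g v * torsion gam t0 v.
Proof.
  specialize (speed_pos v).
  unfold torsion at 1, vs_der. rewrite vd_u_vDerive, vdot_scal_l. field. lra.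
Qed.

Lemma Cinf_s_der_curvature : Cinf (s_der gam (curvature gam) t0).
Proof.
  apply Cinf_mult; [apply Cinf_Derive, Cinf_curvature|].
  apply Cinf_inv, Cinf_speed. intros x; specialize (speed_pos x); lra.
Qed.

Lemma vdot_vDerive_normal v X :
  vdot (vDerive N v) X = - (g v * k v) * vdot X (T v) + g v * torsion gam t0 v * vdot X (B v).
Proof.
  rewrite (vdot_frame_expand v (vDerive N v) X).
  rewrite vDerive_normal_tangent, vDerive_normal_normal, vDerive_normal_binormal. ring.
Qed.

Lemma vDerive_vd_u v :
  vDerive (vd_u gam t0) v = vadd (vscal (Derive g v) (T v)) (vscal (g v * g v * k v) (N v)).
Proof.
  rewrite (vDerive_ext _ _ v vd_u_speed_tangent), vDerive_scal, vDerive_tangent.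
  - apply vec_ext; cbn [vscal vadd vx vy vz mkv fst snd]; ring.
  - apply Cinf_ex_derive, Cinf_speed.
  - apply vCinf_vex_derive, vCinf_tangent.
Qed.

Lemma vex_derive_tangent v : vex_derive T v.
Proof. apply vCinf_vex_derive, vCinf_tangent. Qed.

Lemma vex_derive_normal v : vex_derive N v.
Proof. apply vCinf_vex_derive, vCinf_normal. Qed.

Section Flow.
Variable th : field.
Hypothesis th_smooth : Cinf (th t0).
Hypothesis velocity_smooth : vCinf (vd_t gam t0).
Hypothesis psi2_neq0 : forall v, psi2 gam th t0 v <> 0.
Hypothesis flow_velocity : forall v, vd_t gam t0 v = vscal (k v) (nu_theta gam th t0 v).
Hypothesis flow_angle : forall v, d_t th t0 v = upsilon gam th t0 v.

Local Notation V := (vd_t gam t0).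
Local Notation tau := (torsion gam t0).
Local Notation p1 := (psi1 gam th t0).
Local Notation p2 := (psi2 gam th t0).

Lemma velocity_tangent v : vdot (V v) (T v) = 0.
Proof.
  rewrite flow_velocity. unfold nu_theta.
  rewrite vdot_scal_l, vdot_add_l, !vdot_scal_l, (vdot_comm (N v)), (vdot_comm (B v)),
    tangent_normal_orth, tangent_binormal_orth. ring.
Qed.

Lemma velocity_normal v : vdot (V v) (N v) = p1 v.
Proof.
  rewrite flow_velocity. unfold nu_theta, psi1.
  rewrite vdot_scal_l, vdot_add_l, !vdot_scal_l, (vdot_comm (B v)),
    normal_unit, normal_binormal_orth. ring.
Qed.

Lemma velocity_binormal v : vdot (V v) (B v) = p2 v.
Proof.
  rewrite flow_velocity. unfold nu_theta, psi2.
  rewrite vdot_scal_l, vdot_add_l, !vdot_scal_l, binormal_unit, normal_binormal_orth. ring.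
Qed.

Lemma Derive_psi1 v :
  Derive p1 v = Derive k v * cos (th t0 v) - k v * sin (th t0 v) * Derive (th t0) v.
Proof.
  assert (Hk := Cinf_curvature).
  unfold psi1. apply is_derive_unique. auto_derive.
  - repeat split; apply Cinf_ex_derive; auto.
  - eta_contract. ring.
Qed.

Lemma Derive_psi2 v :
  Derive p2 v = Derive k v * sin (th t0 v) + k v * cos (th t0 v) * Derive (th t0) v.
Proof.
  assert (Hk := Cinf_curvature).
  unfold psi2. apply is_derive_unique. auto_derive.
  - repeat split; apply Cinf_ex_derive; auto.
  - eta_contract. ring.
Qed.

Lemma Derive2_psi1 v :
  Derive (Derive p1) v =
  Derive (Derive k) v * cos (th t0 v) - 2 * Derive k v * sin (th t0 v) * Derive (th t0) v
  - k v * cos (th t0 v) * Derive (th t0) v * Derive (th t0) v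
  - k v * sin (th t0 v) * Derive (Derive (th t0)) v.
Proof.
  assert (Hk := Cinf_curvature). assert (Hk1 := Cinf_Derive _ Hk).
  assert (Ht1 := Cinf_Derive _ th_smooth).
  rewrite (Derive_ext _ _ v Derive_psi1). apply is_derive_unique. auto_derive.
  - repeat split; apply Cinf_ex_derive; auto.
  - eta_contract. ring.
Qed.

Lemma Cinf_psi1 : Cinf p1.
Proof. apply Cinf_mult; [apply Cinf_curvature | apply Cinf_cos, th_smooth]. Qed.

Lemma Cinf_psi2 : Cinf p2.
Proof. apply Cinf_mult; [apply Cinf_curvature | apply Cinf_sin, th_smooth]. Qed.

Lemma vex_derive_velocity v : vex_derive V v.
Proof. apply vCinf_vex_derive, velocity_smooth. Qed.

Lemma tangent_vDerive_velocity v : vdot (T v) (vDerive V v) = - (g v * k v * p1 v).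
Proof.
  assert (E := Derive_const_fun (fun w => vdot (T w) (V w)) 0 v
                 (fun w => eq_trans (vdot_comm _ _) (velocity_tangent w))).
  rewrite Derive_vdot in E by (apply vex_derive_tangent || apply vex_derive_velocity).
  rewrite vDerive_tangent, vdot_scal_l, (vdot_comm (N v)), velocity_normal in E. lra.
Qed.

Lemma normal_vDerive_velocity v : vdot (N v) (vDerive V v) = Derive p1 v - g v * tau v * p2 v.
Proof.
  assert (E : Derive (fun w => vdot (N w) (V w)) v = Derive p1 v).
  { apply Derive_ext. intros w. rewrite vdot_comm. apply velocity_normal. }
  rewrite Derive_vdot in E by (apply vex_derive_normal || apply vex_derive_velocity).
  rewrite vdot_vDerive_normal, velocity_tangent, velocity_binormal in E. lra.
Qed.

Lemma binormal_vDerive_velocity v : vdot (B v) (vDerive V v) = Derive p2 v + g v * tau v * p1 v.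
Proof.
  assert (E : Derive (fun w => vdot (B w) (V w)) v = Derive p2 v).
  { apply Derive_ext. intros w. rewrite vdot_comm. apply velocity_binormal. }
  rewrite Derive_vdot in E by (apply vCinf_vex_derive, vCinf_binormal || apply vex_derive_velocity).
  unfold binormal at 1 in E.
  rewrite vDerive_cross, vdot_add_l, vDerive_tangent, vcross_scal_self in E
    by (apply vex_derive_tangent || apply vex_derive_normal).
  rewrite (vdot_cross_orthonormal _ _ _ _ (normal_unit v) (tangent_normal_orth v)) in E.
  fold (B v) in E.
  rewrite vdot_zero_l, vDerive_normal_normal, vDerive_normal_binormal, velocity_normal in E.
  lra.
Qed.

Lemma normal_vDerive2_velocity v :
  vdot (N v) (vDerive (vDerive V) v) =
  Derive (Derive p1) v - (Derive g v * tau v * p2 v + g v * Derive tau v * p2 v + g v * tau v * Derive p2 v)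
  + g v * k v * vdot (T v) (vDerive V v) - g v * tau v * vdot (B v) (vDerive V v).
Proof.
  assert (E : Derive (fun w => vdot (N w) (vDerive V w)) v =
              Derive (fun w => Derive p1 w - g w * tau w * p2 w) v).
  { apply Derive_ext. intros w. apply normal_vDerive_velocity. }
  rewrite Derive_vdot in E
    by (apply vex_derive_normal || apply vCinf_vex_derive, vCinf_vDerive, velocity_smooth).
  rewrite vdot_vDerive_normal, (vdot_comm _ (T v)), (vdot_comm _ (B v)) in E.
  assert (Hg := Cinf_speed). assert (Ht := Cinf_torsion). assert (Hp := Cinf_psi2).
  assert (Hp1 := Cinf_Derive _ Cinf_psi1).
  replace (Derive (fun w => Derive p1 w - g w * tau w * p2 w) v) with
    (Derive (Derive p1) v
     - (Derive g v * tau v * p2 v + g v * Derive tau v * p2 v + g v * tau v * Derive p2 v)) in E.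
  - lra.
  - symmetry. apply is_derive_unique. auto_derive.
    + repeat split; apply Cinf_ex_derive; auto.
    + eta_contract. ring.
Qed.

Lemma Derive_s_der_curvature v :
  Derive (s_der gam (curvature gam) t0) v =
  (Derive (Derive k) v * g v - Derive k v * Derive g v) / (g v * g v).
Proof.
  assert (Hk1 := Cinf_Derive _ Cinf_curvature). assert (Hg := Cinf_speed).
  assert (Hg0 : g v <> 0) by (specialize (speed_pos v); lra).
  unfold s_der, d_u. apply is_derive_unique. auto_derive.
  - repeat split; try apply Cinf_ex_derive; auto.
  - eta_contract. field. auto.
Qed.

Lemma Derive_psi3 v :
  Derive (psi3 gam th t0) v =
  Derive tau v + (Derive (Derive (th t0)) v * g v - Derive (th t0) v * Derive g v) / (g v * g v).
Proof.
  assert (Ht := Cinf_torsion). assert (Hg := Cinf_speed).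
  assert (Ht1 := Cinf_Derive _ th_smooth).
  assert (Hg0 : g v <> 0) by (specialize (speed_pos v); lra).
  unfold psi3, s_der, d_u. apply is_derive_unique. auto_derive.
  - repeat split; try apply Cinf_ex_derive; auto.
  - eta_contract. field. auto.
Qed.

Lemma density_deriv_K0 v :
  psi1_density_deriv (th t0 v) (d_t th t0 v) (vd_u gam t0 v) (vDerive V v)
    (vDerive (vd_u gam t0) v) (vDerive (vDerive V) v)
  = Derive (s_der gam (curvature gam) t0) v.
Proof.
  rewrite vd_u_speed_tangent, vDerive_vd_u, psi1_density_deriv_frame;
    [| apply speed_pos | apply curvature_pos | apply tangent_unit | apply normal_unit
     | apply tangent_normal_orth].
  rewrite Derive_s_der_curvature.
  assert (Hs : sin (th t0 v) <> 0) by (intros E; apply (psi2_neq0 v); unfold psi2; rewrite E; ring).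
  apply K0_frame_identity with (ta := tau v) (ta1 := Derive tau v) (th1 := Derive (th t0) v)
    (th2 := Derive (Derive (th t0)) v) (BV1 := vdot (B v) (vDerive V v));
    [apply speed_pos | apply curvature_pos | exact Hs | | | | | | ].
  - pose proof (sin2_cos2 (th t0 v)) as SC. unfold Rsqr in SC. lra.
  - rewrite tangent_vDerive_velocity. reflexivity.
  - rewrite normal_vDerive_velocity, Derive_psi1. reflexivity.
  - rewrite binormal_vDerive_velocity, Derive_psi2. reflexivity.
  - rewrite normal_vDerive2_velocity, tangent_vDerive_velocity, binormal_vDerive_velocity,
      Derive2_psi1, Derive_psi2. unfold psi1, psi2. ring.
  - assert (E1 : s_der gam (psi3 gam th) t0 v =
      (Derive tau v + (Derive (Derive (th t0)) v * g v - Derive (th t0) v * Derive g v) / (g v * g v))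
      / g v) by (unfold s_der at 1, d_u; rewrite Derive_psi3; reflexivity).
    assert (E2 : s_der gam (s_der gam (curvature gam)) t0 v =
      (Derive (Derive k) v * g v - Derive k v * Derive g v) / (g v * g v) / g v)
      by (unfold s_der at 1, d_u; rewrite Derive_s_der_curvature; reflexivity).
    rewrite flow_angle. unfold upsilon. rewrite E1, E2. reflexivity.
Qed.

End Flow.

End FixedTime.

(** * Regularity in (t, u) and differentiation under the integral *)

Lemma iter_pd_d_u ds f : iter_pd ds (d_u f) = iter_pd (ds ++ Pu :: nil) f.
Proof. unfold iter_pd. rewrite fold_right_app. reflexivity. Qed.

Lemma iter_pd_d_t ds f : iter_pd ds (d_t f) = iter_pd (ds ++ Pt :: nil) f.
Proof. unfold iter_pd. rewrite fold_right_app. reflexivity. Qed.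

Lemma smooth_on_d_u U f : smooth_on U f -> smooth_on U (d_u f).
Proof. intros H ds t u Hu. rewrite iter_pd_d_u. apply H; auto. Qed.

Lemma smooth_on_d_t U f : smooth_on U f -> smooth_on U (d_t f).
Proof. intros H ds t u Hu. rewrite iter_pd_d_t. apply H; auto. Qed.

Lemma vsmooth_on_vd_u U F : vsmooth_on U F -> vsmooth_on U (vd_u F).
Proof.
  intros [A [B C]]; split; [|split];
  [exact (smooth_on_d_u U _ A) | exact (smooth_on_d_u U _ B) | exact (smooth_on_d_u U _ C)].
Qed.

Lemma vsmooth_on_vd_t U F : vsmooth_on U F -> vsmooth_on U (vd_t F).
Proof.
  intros [A [B C]]; split; [|split];
  [exact (smooth_on_d_t U _ A) | exact (smooth_on_d_t U _ B) | exact (smooth_on_d_t U _ C)].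
Qed.

Lemma Cinf_smooth_on_slice U f t : smooth_on U f -> (forall v, U t v) -> Cinf (f t).
Proof.
  intros Hs HU n. apply Cn_ext with (fun v => iter_pd nil f t v); [reflexivity|].
  generalize (@nil pdir). induction n as [|n IH]; intros ds; [exact I|].
  split.
  - intro x. apply (proj1 (proj2 (Hs ds t x (HU x)))).
  - apply Cn_ext with (fun v => iter_pd (Pu :: ds) f t v); [reflexivity | apply IH].
Qed.

Lemma vCinf_vsmooth_on_slice U F t : vsmooth_on U F -> (forall v, U t v) -> vCinf (F t).
Proof.
  intros [A [B C]] HU; split; [|split];
  [exact (Cinf_smooth_on_slice U _ t A HU) | exact (Cinf_smooth_on_slice U _ t B HU)
  | exact (Cinf_smooth_on_slice U _ t C HU)].
Qed.

Lemma vex_derive_t U F s u : vsmooth_on U F -> U s u -> vex_derive (fun z => F z u) s.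
Proof.
  intros [A [B C]] Hu; split; [|split];
  [exact (proj1 (A nil s u Hu)) | exact (proj1 (B nil s u Hu)) | exact (proj1 (C nil s u Hu))].
Qed.

Lemma vex_derive_u U F s u : vsmooth_on U F -> U s u -> vex_derive (F s) u.
Proof.
  intros [A [B C]] Hu; split; [|split];
  [exact (proj1 (proj2 (A nil s u Hu))) | exact (proj1 (proj2 (B nil s u Hu)))
  | exact (proj1 (proj2 (C nil s u Hu)))].
Qed.

Lemma continuous_smooth_on U f t u : smooth_on U f -> U t u ->
  continuous (fun z : R * R => f (fst z) (snd z)) (t, u).
Proof. intros H Hu. exact (proj2 (proj2 (H nil t u Hu))). Qed.

Lemma open2_locally_2d U t u : open2 U -> U t u -> locally_2d U t u.
Proof. intros HO Hu. destruct (HO t u Hu) as [e [He H]]. exists (mkposreal e He). simpl. auto. Qed.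

Lemma d_t_d_u_comm U f t u : open2 U -> smooth_on U f -> U t u ->
  d_t (d_u f) t u = d_u (d_t f) t u.
Proof.
  intros HO H Hu. unfold d_t, d_u. apply (Schwarz f t u).
  - apply locally_2d_impl with U; [|apply open2_locally_2d; auto].
    apply locally_2d_forall. intros a b Hab.
    split; [|split; [|split]];
      [exact (proj1 (H nil a b Hab)) | exact (proj1 (proj2 (H nil a b Hab)))
      | exact (proj1 (H (Pu :: nil) a b Hab)) | exact (proj1 (proj2 (H (Pt :: nil) a b Hab)))].
  - apply continuity_2d_pt_filterlim, (proj2 (proj2 (H (Pt :: Pu :: nil) t u Hu))).
  - apply continuity_2d_pt_filterlim, (proj2 (proj2 (H (Pu :: Pt :: nil) t u Hu))).
Qed.

Lemma d_t_d_u2_comm U f t u : open2 U -> smooth_on U f -> (forall v, U t v) ->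
  d_t (d_u (d_u f)) t u = d_u (d_u (d_t f)) t u.
Proof.
  intros HO H HU. rewrite (d_t_d_u_comm U); auto using smooth_on_d_u.
  unfold d_u at 1 3. apply Derive_ext. intros w. apply (d_t_d_u_comm U); auto.
Qed.

Lemma vd_t_vd_u_comm U F t u : open2 U -> vsmooth_on U F -> U t u ->
  vd_t (vd_u F) t u = vDerive (vd_t F t) u.
Proof.
  intros HO [A [B C]] Hu.
  apply vec_ext; [exact (d_t_d_u_comm U _ t u HO A Hu) | exact (d_t_d_u_comm U _ t u HO B Hu)
                 | exact (d_t_d_u_comm U _ t u HO C Hu)].
Qed.

Lemma vd_t_vd_u2_comm U F t u : open2 U -> vsmooth_on U F -> (forall v, U t v) ->
  vd_t (vd_u (vd_u F)) t u = vDerive (vDerive (vd_t F t)) u.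
Proof.
  intros HO [A [B C]] HU.
  apply vec_ext; [exact (d_t_d_u2_comm U _ t u HO A HU) | exact (d_t_d_u2_comm U _ t u HO B HU)
                 | exact (d_t_d_u2_comm U _ t u HO C HU)].
Qed.

Ltac continuity_R :=
  repeat match goal with
  | |- continuous (fun y => @?f y + @?g y) _ => apply (continuous_plus f g)
  | |- continuous (fun y => @?f y - @?g y) _ => apply (continuous_minus f g)
  | |- continuous (fun y => @?f y * @?g y) _ => apply (continuous_mult f g)
  | |- continuous (fun y => @?f y / @?g y) _ => apply (continuous_mult f (fun y => / g y))
  | |- continuous (fun y => - @?f y) _ => apply (continuous_opp f)
  | |- continuous (fun y => / @?f y) _ => apply (continuous_comp f Rinv); [|apply continuous_Rinv]
  | |- continuous (fun y => sqrt (@?f y)) _ => apply (continuous_comp f sqrt); [|apply continuous_sqrt]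
  | |- continuous (fun y => cos (@?f y)) _ => apply (continuous_comp f cos); [|apply continuous_cos]
  | |- continuous (fun y => sin (@?f y)) _ => apply (continuous_comp f sin); [|apply continuous_sin]
  | |- continuous (fun _ => IZR _) _ => apply continuous_const
  end.

Definition vcontinuous {X : UniformSpace} (p : X -> vec) (x : X) : Prop :=
  continuous (fun y => vx (p y)) x /\ continuous (fun y => vy (p y)) x /\
  continuous (fun y => vz (p y)) x.

Lemma continuous_vdot {X : UniformSpace} (p q : X -> vec) x :
  vcontinuous p x -> vcontinuous q x -> continuous (fun y => vdot (p y) (q y)) x.
Proof. intros [A [B C]] [A' [B' C']]. unfold vdot. continuity_R; auto. Qed.

Lemma continuous_psi1_density {X : UniformSpace} (a : X -> R) (p q : X -> vec) x :
  continuous a x -> vcontinuous p x -> vcontinuous q x -> 0 < vdot (p x) (p x) ->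
  continuous (fun y => psi1_density (a y) (p y) (q y)) x.
Proof.
  intros Ha Hp Hq Hpp. unfold psi1_density, gram.
  continuity_R; try apply continuous_vdot; auto; lra.
Qed.

Lemma continuous_psi1_density_deriv {X : UniformSpace} (a da : X -> R) (p dp q dq : X -> vec) x :
  continuous a x -> continuous da x -> vcontinuous p x -> vcontinuous dp x ->
  vcontinuous q x -> vcontinuous dq x ->
  0 < vdot (p x) (p x) -> 0 < gram (p x) (q x) ->
  continuous (fun y => psi1_density_deriv (a y) (da y) (p y) (dp y) (q y) (dq y)) x.
Proof.
  intros Ha Hda Hp Hdp Hq Hdq Hpp Hgram. unfold psi1_density_deriv, gram in *.
  assert (S := sqrt_lt_R0 _ Hgram).
  continuity_R; try apply continuous_vdot; auto; try lra.
  all: apply Rgt_not_eq, Rmult_lt_0_compat; lra.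
Qed.

Lemma vcontinuous_vsmooth_on U F t u : vsmooth_on U F -> U t u ->
  vcontinuous (fun z : R * R => F (fst z) (snd z)) (t, u).
Proof.
  intros [A [B C]] Hu. split; [|split];
  [exact (continuous_smooth_on U _ t u A Hu) | exact (continuous_smooth_on U _ t u B Hu)
  | exact (continuous_smooth_on U _ t u C Hu)].
Qed.

Definition nondegenerate (gam : vfield) (s u : R) : Prop :=
  0 < vdot (vd_u gam s u) (vd_u gam s u) /\ 0 < gram (vd_u gam s u) (vd_u (vd_u gam) s u).

Lemma locally_2d_pos (F : R * R -> R) x y : continuous F (x, y) -> 0 < F (x, y) ->
  locally_2d (fun u v => 0 < F (u, v)) x y.
Proof.
  intros C H.
  assert (C2 : continuity_2d_pt (fun u v => F (u, v)) x y).
  { apply continuity_2d_pt_filterlim. apply filterlim_ext with F; [intros [a b]; reflexivity | exact C]. }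
  specialize (C2 (mkposreal _ H)). simpl in C2.
  apply locally_2d_impl with (2 := C2). apply locally_2d_forall. intros u v Hr.
  apply Rabs_def2 in Hr. lra.
Qed.

Lemma nondegenerate_locally U gam t u : open2 U -> vsmooth_on U gam -> U t u -> nondegenerate gam t u ->
  locally_2d (fun s v => U s v /\ nondegenerate gam s v) t u.
Proof.
  intros HO Hs HU [H1 H2].
  assert (CP := vcontinuous_vsmooth_on U _ t u (vsmooth_on_vd_u U _ Hs) HU).
  assert (CQ := vcontinuous_vsmooth_on U _ t u (vsmooth_on_vd_u U _ (vsmooth_on_vd_u U _ Hs)) HU).
  apply locally_2d_and; [apply open2_locally_2d; auto|]. apply locally_2d_and.
  - exact (locally_2d_pos (fun z => vdot (vd_u gam (fst z) (snd z)) (vd_u gam (fst z) (snd z)))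
             t u (continuous_vdot _ _ _ CP CP) H1).
  - refine (locally_2d_pos (fun z => gram (vd_u gam (fst z) (snd z)) (vd_u (vd_u gam) (fst z) (snd z)))
             t u _ H2).
    unfold gram. continuity_R; apply continuous_vdot; auto.
Qed.

Lemma nondegenerate_strip U gam t0 a b : open2 U -> vsmooth_on U gam ->
  (forall v, U t0 v /\ nondegenerate gam t0 v) ->
  exists d : posreal, forall s v, Rabs (s - t0) < d -> a <= v <= b -> U s v /\ nondegenerate gam s v.
Proof.
  intros HO Hs HG.
  assert (Hl : forall v, locally_2d (fun s w => U s w /\ nondegenerate gam s w) t0 v)
    by (intros v; destruct (HG v); apply nondegenerate_locally; auto).
  set (delta := fun v => proj1_sig (constructive_indefinite_description _ (Hl v))).
  assert (Hd : forall v s w, Rabs (s - t0) < delta v -> Rabs (w - v) < delta v ->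
                             U s w /\ nondegenerate gam s w).
  { intros v. unfold delta. destruct (constructive_indefinite_description _ (Hl v)) as [e He]. auto. }
  destruct (compactness_value_1d a b delta) as [d Hc]. exists d.
  intros s v Hs' Hv. specialize (Hc v Hv). apply NNPP. intros HN. apply Hc.
  intros [w [Hw [H1 H2]]]. apply HN. apply (Hd w); lra.
Qed.

Definition density_dt (gam : vfield) (th : field) (s u : R) : R :=
  psi1_density_deriv (th s u) (d_t th s u) (vd_u gam s u) (vd_t (vd_u gam) s u)
    (vd_u (vd_u gam) s u) (vd_t (vd_u (vd_u gam)) s u).

Lemma is_derive_density_t U gam th s u : vsmooth_on U gam -> smooth_on U th ->
  U s u -> nondegenerate gam s u ->
  is_derive (fun z => psi1_density (th z u) (vd_u gam z u) (vd_u (vd_u gam) z u)) s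
    (density_dt gam th s u).
Proof.
  intros Hg Hth HU [H1 H2].
  exact (is_derive_psi1_density (fun z => th z u) (fun z => vd_u gam z u)
    (fun z => vd_u (vd_u gam) z u) s (proj1 (Hth nil s u HU))
    (vex_derive_t U _ s u (vsmooth_on_vd_u U _ Hg) HU)
    (vex_derive_t U _ s u (vsmooth_on_vd_u U _ (vsmooth_on_vd_u U _ Hg)) HU) H1 H2).
Qed.

Lemma continuity_density_dt U gam th t u : vsmooth_on U gam -> smooth_on U th ->
  U t u -> nondegenerate gam t u -> continuity_2d_pt (density_dt gam th) t u.
Proof.
  intros Hg Hth HU [H1 H2].
  assert (HP := vsmooth_on_vd_u U _ Hg). assert (HQ := vsmooth_on_vd_u U _ HP).
  apply continuity_2d_pt_filterlim.
  exact (continuous_psi1_density_deriv _ _ _ _ _ _ (t, u)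
    (continuous_smooth_on U _ t u Hth HU) (continuous_smooth_on U _ t u (smooth_on_d_t U _ Hth) HU)
    (vcontinuous_vsmooth_on U _ t u HP HU) (vcontinuous_vsmooth_on U _ t u (vsmooth_on_vd_t U _ HP) HU)
    (vcontinuous_vsmooth_on U _ t u HQ HU) (vcontinuous_vsmooth_on U _ t u (vsmooth_on_vd_t U _ HQ) HU)
    H1 H2).
Qed.

Lemma vcontinuous_vex_derive F x : vex_derive F x -> vcontinuous F x.
Proof.
  intros [A [B C]].
  split; [|split]; [exact (ex_derive_continuous _ _ A) | exact (ex_derive_continuous _ _ B)
                  | exact (ex_derive_continuous _ _ C)].
Qed.

Section Strip.
Variables (U : R -> R -> Prop) (gam : vfield) (th : field) (t0 a b : R) (d : posreal).
Hypothesis gam_smooth : vsmooth_on U gam.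
Hypothesis th_smooth : smooth_on U th.
Hypothesis strip : forall s v, Rabs (s - t0) < d -> a <= v <= b -> U s v /\ nondegenerate gam s v.

Lemma psi1_speed_density_strip s u : Rabs (s - t0) < d -> a <= u <= b ->
  psi1 gam th s u * speed gam s u = psi1_density (th s u) (vd_u gam s u) (vd_u (vd_u gam) s u).
Proof.
  intros Hs Hu. destruct (strip s u Hs Hu) as [HU [Hpp _]].
  apply psi1_speed_density; auto. apply (vex_derive_u U); auto using vsmooth_on_vd_u.
Qed.

Lemma is_derive_psi1_speed_t s u : Rabs (s - t0) < d -> a <= u <= b ->
  is_derive (fun z => psi1 gam th z u * speed gam z u) s (density_dt gam th s u).
Proof.
  intros Hs Hu. assert (He : 0 < d - Rabs (s - t0)) by lra.
  apply is_derive_ext_loc with (fun z => psi1_density (th z u) (vd_u gam z u) (vd_u (vd_u gam) z u)).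
  - exists (mkposreal _ He). intros y Hy. change (Rabs (y - s) < d - Rabs (s - t0)) in Hy.
    symmetry. apply psi1_speed_density_strip; auto.
    replace (y - t0) with ((y - s) + (s - t0)) by ring.
    eapply Rle_lt_trans; [apply Rabs_triang | lra].
  - destruct (strip s u Hs Hu). apply (is_derive_density_t U); auto.
Qed.

Lemma ex_RInt_psi1_speed s c e : Rabs (s - t0) < d -> a <= c -> c <= e -> e <= b ->
  ex_RInt (fun u => psi1 gam th s u * speed gam s u) c e.
Proof.
  intros Hs Hac Hce Heb.
  apply ex_RInt_ext with (fun u => psi1_density (th s u) (vd_u gam s u) (vd_u (vd_u gam) s u)).
  - intros u Hu. rewrite Rmin_left, Rmax_right in Hu by lra.
    symmetry. apply psi1_speed_density_strip; auto; lra.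
  - apply (ex_RInt_continuous (fun u => psi1_density (th s u) (vd_u gam s u) (vd_u (vd_u gam) s u))).
    intros u Hu. rewrite Rmin_left, Rmax_right in Hu by lra.
    destruct (strip s u Hs) as [HU [Hpp _]]; [lra|].
    assert (HP := vsmooth_on_vd_u U _ gam_smooth).
    apply continuous_psi1_density; auto.
    + exact (ex_derive_continuous (fun v => th s v) u (proj1 (proj2 (th_smooth nil s u HU)))).
    + apply vcontinuous_vex_derive, (vex_derive_u U); auto.
    + apply vcontinuous_vex_derive, (vex_derive_u U); auto using vsmooth_on_vd_u.
Qed.

End Strip.

Definition periodic {A : Type} (f : R -> A) : Prop := forall v, f (v + 2 * PI) = f v.

Lemma Derive_periodic (f : R -> R) : periodic f -> periodic (Derive f).
Proof.
  intros H v. unfold Derive. f_equal. apply Lim_ext. intros h.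
  replace (v + 2 * PI + h) with ((v + h) + 2 * PI) by ring. rewrite !H. reflexivity.
Qed.

Lemma vDerive_periodic F : periodic F -> periodic (vDerive F).
Proof.
  intros H v. apply vec_ext; cbn [vDerive vx vy vz mkv fst snd];
  apply Derive_periodic; intros w; rewrite H; reflexivity.
Qed.

Lemma s_der_curvature_periodic gam t0 : periodic (gam t0) -> periodic (s_der gam (curvature gam) t0).
Proof.
  intros H.
  assert (HP : periodic (vd_u gam t0)) by (intros v; rewrite !vd_u_vDerive; apply vDerive_periodic; auto).
  assert (Hg : periodic (speed gam t0)) by (intros v; unfold speed; rewrite HP; auto).
  assert (HT : periodic (tangent gam t0)) by (intros v; unfold tangent; rewrite HP, Hg; auto).
  assert (HT' : periodic (vd_u (tangent gam) t0))
    by (intros v; rewrite !vd_u_vDerive; apply vDerive_periodic; auto).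
  assert (Hk : periodic (curvature gam t0)) by (intros v; unfold curvature, vs_der; rewrite HT', Hg; auto).
  intros v. unfold s_der, d_u. rewrite Hg. f_equal. apply Derive_periodic, Hk.
Qed.

Lemma is_derive_total_psi1 U gam th t0 :
  open2 U -> vsmooth_on U gam -> smooth_on U th -> (forall v, U t0 v) ->
  (forall v, 0 < speed gam t0 v /\ 0 < curvature gam t0 v) ->
  is_derive (total_psi1 gam th) t0 (RInt (density_dt gam th t0) 0 (2 * PI)).
Proof.
  intros HO Hg Hth HU Hpos.
  assert (HG : forall v, U t0 v /\ nondegenerate gam t0 v).
  { intros v. destruct (Hpos v) as [Hsp Hk]. assert (Hpp := vnorm_pos_vdot _ Hsp).
    split; [|split]; auto. apply gram_pos; auto. apply (vex_derive_u U); auto using vsmooth_on_vd_u. }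
  (* The margin around [0, 2 PI] provides the neighbourhoods of u = 0 and u = 2 PI needed for
     joint continuity of the differentiated integrand. *)
  destruct (nondegenerate_strip U gam t0 (-1) (2 * PI + 1) HO Hg HG) as [d Hd].
  assert (PI0 := PI_RGT_0).
  assert (Em : Rmin 0 (2 * PI) = 0) by (apply Rmin_left; lra).
  assert (EM : Rmax 0 (2 * PI) = 2 * PI) by (apply Rmax_right; lra).
  assert (Hder := is_derive_psi1_speed_t U gam th t0 (-1) (2 * PI + 1) d Hg Hth Hd).
  replace (RInt (density_dt gam th t0) 0 (2 * PI))
    with (RInt (fun u => Derive (fun z => psi1 gam th z u * speed gam z u) t0) 0 (2 * PI)).
  2:{ apply RInt_ext. intros x Hx. rewrite Em, EM in Hx. apply is_derive_unique, Hder; [|lra].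
      rewrite Rminus_diag, Rabs_R0; apply cond_pos. }
  apply is_derive_RInt_param; rewrite ?Em, ?EM.
  - exists d. intros s Hs u Hu. eexists. apply Hder; [exact Hs | lra].
  - intros u Hu. apply continuity_2d_pt_ext_loc with (density_dt gam th).
    + assert (Hm : 0 < Rmin d 1) by (apply Rmin_pos; [apply cond_pos | lra]).
      exists (mkposreal _ Hm). simpl. intros s w Hs Hw.
      pose proof (Rmin_l d 1). pose proof (Rmin_r d 1). apply Rabs_def2 in Hw.
      symmetry. apply is_derive_unique, Hder; lra.
    + destruct (HG u). apply (continuity_density_dt U); auto.
  - exists d. intros s Hs.
    apply (ex_RInt_psi1_speed U gam th t0 (-1) (2 * PI + 1) d); auto; lra.
Qed.

Lemma RInt_density_dt_K0 U gam th t0 :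
  open2 U -> vsmooth_on U gam -> smooth_on U th -> (forall v, U t0 v) -> periodic (gam t0) ->
  (forall v, 0 < speed gam t0 v /\ 0 < curvature gam t0 v /\ psi2 gam th t0 v <> 0) ->
  (forall v, vd_t gam t0 v = vscal (curvature gam t0 v) (nu_theta gam th t0 v) /\
             d_t th t0 v = upsilon gam th t0 v) ->
  RInt (density_dt gam th t0) 0 (2 * PI) = 0.
Proof.
  intros HO Hg Hth HU Hper Hpos Hflow.
  assert (Hgam := vCinf_vsmooth_on_slice U gam t0 Hg HU).
  assert (Hsp : forall v, 0 < speed gam t0 v) by apply Hpos.
  assert (Hk : forall v, 0 < curvature gam t0 v) by apply Hpos.
  assert (HW := Cinf_s_der_curvature gam t0 Hgam Hsp Hk).
  rewrite (RInt_ext _ (Derive (s_der gam (curvature gam) t0))).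
  - rewrite RInt_Derive.
    + assert (E := s_der_curvature_periodic gam t0 Hper 0). rewrite Rplus_0_l in E.
      rewrite E. apply Rminus_diag.
    + intros x _. apply Cinf_ex_derive, HW.
    + intros x _. apply (ex_derive_continuous (Derive (s_der gam (curvature gam) t0))).
      apply Cinf_ex_derive, Cinf_Derive, HW.
  - intros u _. unfold density_dt.
    rewrite (vd_t_vd_u_comm U), (vd_t_vd_u2_comm U); auto.
    apply density_deriv_K0; auto.
    + exact (Cinf_smooth_on_slice U th t0 Hth HU).
    + exact (vCinf_vsmooth_on_slice U _ t0 (vsmooth_on_vd_t U _ Hg) HU).
    + apply Hpos.
    + apply Hflow.
    + apply Hflow.
Qed.

Theorem mainTheorem19 (Tmax : Rbar) (gam : vfield) (th : field) (U : R -> R -> Prop) :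
  (* gamma, theta are smooth on [0,Tmax) x R (restrictions of smooth maps on an open U) *)
  open2 U ->
  (forall t u, 0 <= t -> Rbar_lt (Finite t) Tmax -> U t u) ->
  vsmooth_on U gam -> smooth_on U th ->
  (* closed curves: 2pi-periodic in u *)
  (forall t u, 0 <= t -> Rbar_lt (Finite t) Tmax ->
     gam t (u + 2 * PI) = gam t u /\ th t (u + 2 * PI) = th t u) ->
  (* regular parametrization, kappa > 0, psi2 <> 0 *)
  (forall t u, 0 <= t -> Rbar_lt (Finite t) Tmax ->
     0 < speed gam t u /\ 0 < curvature gam t u /\ psi2 gam th t u <> 0) ->
  (* framed curvature flow *)
  (forall t u, 0 <= t -> Rbar_lt (Finite t) Tmax ->
     vd_t gam t u = vscal (curvature gam t u) (nu_theta gam th t u) /\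
     d_t th t u = upsilon gam th t u) ->
  forall t1 t2, 0 <= t1 -> Rbar_lt (Finite t1) Tmax -> 0 <= t2 -> Rbar_lt (Finite t2) Tmax ->
    total_psi1 gam th t1 = total_psi1 gam th t2.
Proof.
  intros HO Hdom Hg Hth Hper Hpos Hflow t1 t2 H1 H1' H2 H2'.
  assert (Hder : forall t, 0 <= t -> Rbar_lt t Tmax -> is_derive (total_psi1 gam th) t 0).
  { intros t Ht Ht'.
    rewrite <- (RInt_density_dt_K0 U gam th t); auto.
    - apply (is_derive_total_psi1 U); auto. intros v; split; apply Hpos; auto.
    - intros v; apply Hper; auto. }
  assert (Hin : forall x, Rmin t1 t2 <= x <= Rmax t1 t2 -> 0 <= x /\ Rbar_lt x Tmax).
  { intros x [Hx1 Hx2]. unfold Rmin, Rmax in *.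
    destruct (Rle_dec t1 t2), Tmax; simpl in *; split; lra. }
  destruct (MVT_gen (total_psi1 gam th) t1 t2 (fun _ => 0)) as [c [_ Hc]].
  - intros x Hx. apply Hder; apply Hin; lra.
  - intros x Hx. apply continuity_pt_filterlim, (ex_derive_continuous (total_psi1 gam th)).
    eexists. apply Hder; apply Hin; lra.
  - lra.
Qed.
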